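(* Let $IS$ be an ISRL with model $M$ and $\varphi$ a formula of the $A\bar BN$ fragment of EHS$^{+}$. If $I,I'$ are intervals of $M$ with $\mathrm{g}(I)=\mathrm{g}(I')$, then $MCT_I^\varphi=MCT_{I'}^\varphi$.
   Context: **Regular expressions.** For a finite alphabet $X$, $RE_X$ is the set of regular expressions $e ::= \emptyset \mid \epsilon \mid s \mid e;e \mid e+e \mid e^*$ with $s\in X$. $L(e)$ denotes the standard language of $e$. **ISRL.** Fix agents $A=\{0,\dots,m\}$ and a finite set $\mathit{Var}$ of propositional variables. An ISRL is $IS=(\{L_i\},\{l_i^0\},\{ACT_i\},\{P_i\},\{t_i\},\lambda)$ where, for each $i\in A$: - $L_i$ is a finite set of local states and $l_i^0\in L_i$; - $ACT_i$ is a finite set of actions and $P_i:L_i\to 2^{ACT_i}$; - $t_i\subseteq L_i\times ACT\times L_i$, with $ACT=ACT_0\times\dots\times ACT_m$; - $\lambda:\mathit{Var}\to RE_G$, where $G=L_0\times\dots\times L_m$. $t^G((l_0,\dots,l_m),(l'_0,\dots,l'_m))$ holds iff some $(a_0,\dots,a_m)\in ACT$ has $a_i\in P_i(l_i)$ and $(l_i,(a_0,\dots,a_m),l'_i)\in t_i$ for all $i$. **Model of $IS$.** - States $S$ are the nonempty sequences $g_0\dots g_k$ with $g_0=(l_0^0,\dots,l_m^0)$ and $t^G(g_j,g_{j+1})$ for all $j<k$. - $t(g_0\dots g_k,g'_0\dots g'_l)$ iff $l=k+1$ and $g_j=g'_j$ for all $j\le k$. - $g_0\dots g_k\sim_i g'_0\dots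 g'_l$ iff $g_k,g'_l$ have the same $i$-th component. - $\mathrm{g}(g_0\dots g_k)=g_k$. **Intervals.** An interval is a nonempty sequence $I=s_1\dots s_n$ of states with $t(s_j,s_{j+1})$; $\mathit{first}(I)=s_1$, $\mathit{last}(I)=s_n$, $\mathrm{g}(I)=\mathrm{g}(s_1)\dots\mathrm{g}(s_n)$, and $\mathit{pi}(I)$ iff $n=1$. **Relations.** - $I\sim_i I'$ iff $|I|=|I'|$ and the states are pointwise $\sim_i$-related; $\sim_\Gamma$ is the transitive closure of $\bigcup_{i\in\Gamma}\sim_i$. - $I R_A I'$ iff $\mathit{first}(I')=\mathit{last}(I)$. - $I R_{\bar B} I'$ iff $I'=II_1$ for some interval $I_1$. - $I R_N I'$ iff $t(\mathit{last}(I),\mathit{first}(I'))$. - $R_{K_i}=\sim_i$, $R_{C_\Gamma}=\sim_\Gamma$, $R_{\langle A\rangle}=R_A$, $R_{\langle\bar B\rangle}=R_{\bar B}$, $R_{\langle N\rangle}=R_N$. **$A\bar BN$ fragment of EHS$^{+}$.** Syntax: $\varphi::=\mathit{pi}\mid p\mid\neg\varphi\mid\varphi\wedge\varphi\mid K_i\varphi\mid C_\Gamma\varphi\mid\langle A\rangle\varphi\mid\langle\bar B\rangle\varphi\mid\langle N\rangle\varphi$. A top-level sub-formula of $\varphi$ is a sub-formula of the form $X\psi$ with $X$ one of these modalities that is not in the scope of any modality. **Automata.** For $p\in\mathit{Var}$ let $\mathcal A^p$ be the minimal complete deterministic finite automaton for $L(\lambda(p))$ over alphabet $G$. $\mathcal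 A_I$ maps each $p$ to the state of $\mathcal A^p$ reached after reading $\mathrm{g}(I)$. **Modal context tree.** $MCT_I^\varphi$ is defined by recursion on $\varphi$ as the pair consisting of: - the root label $(\mathrm{g}(\mathit{first}(I)),\mathrm{g}(\mathit{last}(I)),\mathit{pi}(I),\mathcal A_I)$; - for each top-level sub-formula $X\psi$ of $\varphi$, the set $\{MCT_{I'}^\psi : I R_X I'\}$. *)

From HB Require Import structures.
From Stdlib Require Import Relation_Operators.
From mathcomp Require Import all_boot.
Set Implicit Arguments. Unset Strict Implicit. Unset Printing Implicit Defensive.

Inductive re (X : Type) : Type :=
| ReEmpty | ReEps | ReSym (s : X) | ReSeq (e1 e2 : re X) | ReAlt (e1 e2 : re X)
| ReStar (e : re X).
Arguments ReEmpty {X}. Arguments ReEps {X}.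

Inductive star_lang (X : Type) (Lg : seq X -> Prop) : seq X -> Prop :=
| star_nil : star_lang Lg [::]
| star_app u v : Lg u -> star_lang Lg v -> star_lang Lg (u ++ v).

Fixpoint lang (X : Type) (e : re X) : seq X -> Prop :=
  match e with
  | ReEmpty => fun _ => False
  | ReEps => fun w => w = [::]
  | ReSym s => fun w => w = [:: s]
  | ReSeq e1 e2 => fun w => exists u v, w = u ++ v /\ lang e1 u /\ lang e2 v
  | ReAlt e1 e2 => fun w => lang e1 w \/ lang e2 w
  | ReStar e1 => star_lang (lang e1)
  end.

Record dfa (X : Type) := Dfa {
  dstate : finType;
  dinit : dstate;
  ddelta : dstate -> X -> dstate;
  dfinal : {set dstate} }.

Definition drun_from (X : Type) (A : dfa X) (q : dstate A) (w : seq X) : dstate A :=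
  foldl (@ddelta X A) q w.
Definition drun (X : Type) (A : dfa X) (w : seq X) : dstate A := drun_from (dinit A) w.

Definition minimal_dfa_for (X : Type) (A : dfa X) (e : re X) : Prop :=
  [/\ (forall w, drun A w \in dfinal A <-> lang e w),
      (forall q : dstate A, exists w, drun A w = q) &
      (forall q q' : dstate A, q <> q' ->
         exists u, (drun_from q u \in dfinal A) <> (drun_from q' u \in dfinal A))].

Inductive form (m : nat) (Var : Type) : Type :=
| FPi
| FVar (p : Var)
| FNeg (f : form m Var)
| FAnd (f g : form m Var)
| FK (i : 'I_m.+1) (f : form m Var)
| FC (Gam : {set 'I_m.+1}) (f : form m Var)
| FA (f : form m Var)
| FBbar (f : form m Var)
| FN (f : form m Var).
Arguments FPi {m Var}.

Section ISRL.
Variables (m : nat) (L ACT : 'I_m.+1 -> finType) (Var : finType).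

Definition gstate := forall i : 'I_m.+1, L i.
Definition jaction := forall i : 'I_m.+1, ACT i.

Record ISRL := MkISRL {
  l0 : forall i, L i;
  Prot : forall i, L i -> {set ACT i};
  trans : forall i, L i -> jaction -> L i -> Prop;
  lambda : Var -> re gstate }.

Variable IS : ISRL.
Variable aut : Var -> dfa gstate.

Definition ginit : gstate := fun i => l0 IS i.

Definition tG (g g' : gstate) : Prop :=
  exists a : jaction, forall i, a i \in Prot IS (g i) /\ trans IS (g i) a (g' i).

Fixpoint chainP (T : Type) (R : T -> T -> Prop) (x : T) (s : seq T) : Prop :=
  match s with
  | [::] => True
  | y :: s' => R x y /\ chainP R y s'
  end.

Definition mstate := seq gstate.
Definition is_state (s : mstate) : Prop :=
  match s with
  | [::] => False
  | g0 :: rest => g0 = ginit /\ chainP tG g0 rest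
  end.

Definition tM (s s' : mstate) : Prop := exists g, s' = rcons s g.

Definition gof (s : mstate) : gstate := last ginit s.

Definition simS (i : 'I_m.+1) (s s' : mstate) : Prop := gof s i = gof s' i.

Fixpoint allPr (T : Type) (P : T -> Prop) (s : seq T) : Prop :=
  match s with [::] => True | x :: s' => P x /\ allPr P s' end.

Definition interval := seq mstate.
Definition is_interval (I : interval) : Prop :=
  match I with
  | [::] => False
  | s1 :: rest => allPr is_state I /\ chainP tM s1 rest
  end.

Definition ifirst (I : interval) : mstate := head [::] I.
Definition ilast (I : interval) : mstate := last [::] I.
Definition gI (I : interval) : seq gstate := map gof I.
Definition ipi (I : interval) : bool := size I == 1.

Fixpoint forall2P (T : Type) (R : T -> T -> Prop) (s t : seq T) : Prop :=
  match s, t with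
  | [::], [::] => True
  | x :: s', y :: t' => R x y /\ forall2P R s' t'
  | _, _ => False
  end.

(* relations on intervals (the target is always required to be an interval of M) *)
Definition RK (i : 'I_m.+1) (I J : interval) : Prop :=
  is_interval J /\ forall2P (simS i) I J.
Definition RC (Gam : {set 'I_m.+1}) : interval -> interval -> Prop :=
  clos_trans interval (fun I J => is_interval I /\ exists2 i, i \in Gam & RK i I J).
Definition RA (I J : interval) : Prop := is_interval J /\ ifirst J = ilast I.
Definition RBbar (I J : interval) : Prop :=
  is_interval J /\ exists I1, is_interval I1 /\ J = I ++ I1.
Definition RN (I J : interval) : Prop := is_interval J /\ tM (ilast I) (ifirst J).

Definition Label : Type :=
  (gstate * gstate * bool * (forall p : Var, dstate (aut p)))%type.

Definition label (I : interval) : Label :=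
  (gof (ifirst I), gof (ilast I), ipi I, fun p => drun (aut p) (gI I)).

(* One component (a set of MCTs for psi) per top-level sub-formula X psi,
   in left-to-right order of occurrence. *)
Fixpoint Ch (phi : form m Var) : Type :=
  match phi with
  | FPi | FVar _ => unit
  | FNeg a => Ch a
  | FAnd a b => (Ch a * Ch b)%type
  | FK _ a | FC _ a | FA a | FBbar a | FN a => (Label * Ch a)%type -> Prop
  end.

Definition MCTtype (phi : form m Var) : Type := (Label * Ch phi)%type.

Fixpoint ch (phi : form m Var) (I : interval) {struct phi} : Ch phi :=
  match phi return Ch phi with
  | FPi | FVar _ => tt
  | FNeg a => ch a I
  | FAnd a b => (ch a I, ch b I)
  | FK i a => fun t => exists J, RK i I J /\ (label J, ch a J) = t
  | FC Gam a => fun t => exists J, RC Gam I J /\ (label J, ch a J) = t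
  | FA a => fun t => exists J, RA I J /\ (label J, ch a J) = t
  | FBbar a => fun t => exists J, RBbar I J /\ (label J, ch a J) = t
  | FN a => fun t => exists J, RN I J /\ (label J, ch a J) = t
  end.

Definition MCT (phi : form m Var) (I : interval) : MCTtype phi := (label I, ch phi I).

End ISRL.

From HB Require Import structures.
From mathcomp Require Import all_boot.
From Stdlib Require Import Relation_Operators FunctionalExtensionality PropExtensionality.

Set Implicit Arguments. Unset Strict Implicit. Unset Printing Implicit Defensive.

(* Everything an MCT records about an interval I is a function of g(I).  The
   label reads g(I) directly.  K_i and C_Gamma relate intervals pointwise
   through the last global states only, so they depend on the source only
   through g(I).  For A, N and Bbar the successors of I are intervals whose
   states all extend the last state s of I; replacing that common prefix s by
   any other state s' with the same last global state keeps them runs of the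
   system (the transition relation only looks at the last global state) and
   keeps their global trace, so I and I' have matching successors. *)

Lemma chainP_cat (T : Type) (R : T -> T -> Prop) (x : T) (a b : seq T) :
  chainP R x (a ++ b) <-> chainP R x a /\ chainP R (last x a) b.
Proof. by elim: a x => [|y a IH] x /=; [tauto | rewrite IH; tauto]. Qed.

Lemma allPr_cat (T : Type) (P : T -> Prop) (a b : seq T) :
  allPr P (a ++ b) <-> allPr P a /\ allPr P b.
Proof. by elim: a => [|y a IH] /=; [tauto | rewrite IH; tauto]. Qed.

Lemma allPr_last (T : Type) (P : T -> Prop) (x : T) (s : seq T) :
  P x -> allPr P s -> P (last x s).
Proof. by elim: s x => [|y s IH] x //= Px [Py Ps]; apply: IH. Qed.

Section Interval.
Variables (m : nat) (L ACT : 'I_m.+1 -> finType) (Var : finType)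
  (IS : ISRL L ACT Var) (aut : Var -> dfa (gstate L)).

Local Notation is_state := (is_state IS).
Local Notation is_interval := (is_interval IS).
Local Notation gof := (gof IS).
Local Notation gI := (gI IS).
Local Notation tM := (@tM _ L).

Lemma gof_cat (s u : mstate L) : gof (s ++ u) = last (gof s) u.
Proof. by rewrite /gof last_cat. Qed.

Lemma is_state_cat (s u : mstate L) :
  is_state s -> is_state (s ++ u) <-> chainP (tG IS) (gof s) u.
Proof. by case: s => [|g0 r] //= [-> Hr]; rewrite chainP_cat /gof /=; tauto. Qed.

Lemma is_state_change_prefix (s s' u : mstate L) :
  is_state s -> is_state s' -> gof s = gof s' ->
  is_state (s ++ u) -> is_state (s' ++ u).
Proof. by move=> Hs Hs' Egs /(is_state_cat _ Hs); rewrite Egs => /(is_state_cat _ Hs'). Qed.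

Lemma tM_chain_prefix (s u0 : mstate L) (rest : interval L) :
  chainP tM (s ++ u0) rest ->
  exists2 U, rest = map (cat s) U & chainP tM u0 U.
Proof.
elim: rest u0 => [|t rest IH] u0 /=; first by exists [::].
move=> [[g ->] Hc]; rewrite rcons_cat in Hc.
have [U -> HU] := IH _ Hc.
by exists (rcons u0 g :: U); [rewrite /= rcons_cat | split => //; exists g].
Qed.

Lemma tM_chain_cat (s u0 : mstate L) (U : interval L) :
  chainP tM u0 U -> chainP tM (s ++ u0) (map (cat s) U).
Proof.
elim: U u0 => [|v U IH] u0 //= [[g ->] Hc].
by split; [exists g; rewrite rcons_cat | apply: IH].
Qed.

Lemma interval_change_prefix (s s' u0 : mstate L) (J : interval L) :
  is_state s -> is_state s' -> gof s = gof s' ->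
  is_interval J -> ifirst J = s ++ u0 ->
  exists J', [/\ is_interval J', ifirst J' = s' ++ u0 & gI J = gI J'].
Proof.
move=> Hs Hs' Egs; case: J => [|j rest] //= [Hall Hc] Ej; subst j.
have [U Erest HU] := tM_chain_prefix Hc; subst rest.
exists (map (cat s') (u0 :: U)); split => //.
- split; last exact: tM_chain_cat.
  have : allPr is_state (map (cat s) (u0 :: U)) by [].
  elim: (u0 :: U) => [|v W IH] //= [Hv HW].
  by split; [apply: (is_state_change_prefix Hs Hs' Egs Hv) | apply: IH].
- change (gI (map (cat s) (u0 :: U)) = gI (map (cat s') (u0 :: U))).
  rewrite /gI -!map_comp; apply: eq_map => v /=.
  by rewrite !gof_cat Egs.
Qed.

Lemma interval_nonnil (I : interval L) : is_interval I -> I <> [::].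
Proof. by case: I. Qed.

Lemma is_interval_cat (I I1 : interval L) : I <> [::] -> I1 <> [::] ->
  is_interval (I ++ I1) <->
  is_interval I /\ is_interval I1 /\ tM (ilast I) (ifirst I1).
Proof.
case: I => [|i r] // _; case: I1 => [|j r1] // _.
by rewrite /= allPr_cat chainP_cat /ilast /=; tauto.
Qed.

Lemma ilast_state (I : interval L) : is_interval I -> is_state (ilast I).
Proof. by case: I => [|i r] //= [[Hi Hr] _]; exact: allPr_last Hi Hr. Qed.

Lemma gof_ifirst (I : interval L) : gof (ifirst I) = head (ginit IS) (gI I).
Proof. by case: I. Qed.

Lemma gof_ilast (I : interval L) : gof (ilast I) = last (ginit IS) (gI I).
Proof. by rewrite /gI /ilast -(last_map gof). Qed.

Lemma label_gI (I I' : interval L) : gI I = gI I' -> label IS aut I = label IS aut I'.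
Proof.
move=> E; rewrite /label !gof_ifirst !gof_ilast /ipi.
by rewrite -(size_map gof I) -(size_map gof I') -/(gI I) -/(gI I') E.
Qed.

Lemma ilast_gof_eq (I I' : interval L) : gI I = gI I' -> gof (ilast I) = gof (ilast I').
Proof. by rewrite !gof_ilast => ->. Qed.

Definition gI_simulation (R : interval L -> interval L -> Prop) : Prop :=
  forall I I' J, is_interval I -> is_interval I' -> gI I = gI I' -> R I J ->
  exists J', [/\ R I' J', is_interval J, is_interval J' & gI J = gI J'].

Lemma forall2P_simS_gI (i : 'I_m.+1) (I I' J : interval L) :
  gI I = gI I' -> forall2P (simS IS i) I J -> forall2P (simS IS i) I' J.
Proof.
elim: I I' J => [|a I IH] [|a' I'] [|b J] //= [Ea E] [Hab HJ].
by split; [rewrite /simS -Ea | apply: IH HJ].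
Qed.

Lemma gI_simulation_RK (i : 'I_m.+1) : gI_simulation (RK IS i).
Proof.
by move=> I I' J _ _ E [HJ Hf]; exists J; split => //; split => //; apply: forall2P_simS_gI Hf.
Qed.

Lemma RC_target (Gam : {set 'I_m.+1}) (I J : interval L) :
  RC IS Gam I J -> is_interval J.
Proof. by elim => [x y [_ [i _ []]] | x y z]. Qed.

Lemma RC_gI (Gam : {set 'I_m.+1}) (I I' J : interval L) :
  is_interval I' -> gI I = gI I' -> RC IS Gam I J -> RC IS Gam I' J.
Proof.
move=> HI' E H; elim: H I' HI' E => [x y [_ [i Hi [Hy Hf]]] | x y z _ IH Hyz _] I' HI' E.
- by apply: t_step; split => //; exists i => //; split => //; apply: forall2P_simS_gI Hf.
- exact: t_trans (IH I' HI' E) Hyz.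
Qed.

Lemma gI_simulation_RC (Gam : {set 'I_m.+1}) : gI_simulation (RC IS Gam).
Proof.
move=> I I' J _ HI' E H; have HJ := RC_target H.
by exists J; split => //; apply: RC_gI H.
Qed.

Lemma gI_simulation_RA : gI_simulation (RA IS).
Proof.
move=> I I' J HI HI' E [HJ Ef].
have [J' [HJ' Ef' EJ]] := interval_change_prefix (u0 := [::]) (ilast_state HI)
  (ilast_state HI') (ilast_gof_eq E) HJ (etrans Ef (esym (cats0 _))).
by exists J'; split => //; split => //; rewrite Ef' cats0.
Qed.

Lemma gI_simulation_RN : gI_simulation (RN IS).
Proof.
move=> I I' J HI HI' E [HJ [g Ef]].
have [J' [HJ' Ef' EJ]] := interval_change_prefix (u0 := [:: g]) (ilast_state HI)
  (ilast_state HI') (ilast_gof_eq E) HJ (etrans Ef (esym (cats1 _ _))).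
by exists J'; split => //; split => //; exists g; rewrite Ef' cats1.
Qed.

Lemma gI_simulation_RBbar : gI_simulation (RBbar IS).
Proof.
move=> I I' J HI HI' E [HJ [I1 [HI1 EJ]]]; subst J.
have [_ [_ [g Ef]]] := (is_interval_cat (interval_nonnil HI) (interval_nonnil HI1)).1 HJ.
have [I1' [HI1' Ef' E1]] := interval_change_prefix (u0 := [:: g]) (ilast_state HI)
  (ilast_state HI') (ilast_gof_eq E) HI1 (etrans Ef (esym (cats1 _ _))).
have HJ' : is_interval (I' ++ I1').
  apply/(is_interval_cat (interval_nonnil HI') (interval_nonnil HI1')).
  by do !split => //; exists g; rewrite Ef' cats1.
exists (I' ++ I1'); split => //; first by split => //; exists I1'.
by rewrite /gI !map_cat -/(gI I) -/(gI I1) -/(gI I') -/(gI I1') E E1.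
Qed.

Lemma successors_gI (R : interval L -> interval L -> Prop) (T : Type)
    (f : interval L -> T) (I I' : interval L) :
  gI_simulation R ->
  (forall J J', is_interval J -> is_interval J' -> gI J = gI J' -> f J = f J') ->
  is_interval I -> is_interval I' -> gI I = gI I' ->
  (fun t => exists J, R I J /\ f J = t) = (fun t => exists J, R I' J /\ f J = t).
Proof.
move=> simR f_gI HI HI' E; apply: functional_extensionality => t.
apply: propositional_extensionality; split => -[J [HIJ <-]].
- have [J' [HIJ' HJ HJ' EJ]] := simR _ _ _ HI HI' E HIJ.
  by exists J'; rewrite (f_gI J' J).
- have [J' [HIJ' HJ HJ' EJ]] := simR _ _ _ HI' HI (esym E) HIJ.
  by exists J'; rewrite (f_gI J' J).
Qed.

Lemma ch_gI (phi : form m Var) (I I' : interval L) :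
  is_interval I -> is_interval I' -> gI I = gI I' -> ch IS aut phi I = ch IS aut phi I'.
Proof.
elim: phi I I' => [|p|a IH|a IHa b IHb|i a IH|Gam a IH|a IH|a IH|a IH] I I' HI HI' E //=;
  try exact: IH; first by rewrite (IHa I I') // (IHb I I').
all: apply: successors_gI HI HI' E => [|J J' HJ HJ' EJ];
  last by rewrite (label_gI EJ) (IH J J').
- exact: gI_simulation_RK.
- exact: gI_simulation_RC.
- exact: gI_simulation_RA.
- exact: gI_simulation_RBbar.
- exact: gI_simulation_RN.
Qed.

End Interval.

Theorem mainTheorem9 (m : nat) (L ACT : 'I_m.+1 -> finType) (Var : finType)
  (IS : ISRL L ACT Var) (aut : Var -> dfa (gstate L))
  (Haut : forall p : Var, minimal_dfa_for (aut p) (lambda IS p))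
  (phi : form m Var) (I I' : interval L) :
  is_interval IS I -> is_interval IS I' -> gI IS I = gI IS I' ->
  MCT IS aut phi I = MCT IS aut phi I'.
Proof.
move=> HI HI' E.
by rewrite /MCT (label_gI aut E) (ch_gI aut phi HI HI' E).
Qed.
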